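(* If a WCMDP is symmetric, then for every stationary Markov policy $\pi$ there exists a permutation invariant stationary Markov policy $\bar\pi$ such that \[ \mathbf{V}_0^{\bar\pi}=\Big(\frac1N\sum_{n=1}^N V^{\pi}_{0,n}\Big)\mathbf{1}, \] where $\mathbf{1}\in\mathbb{R}^N$ is the all-ones vector.
   Context: A WCMDP consists of $N$ sub-MDPs $n\in[N]$, each with finite state set $\mathcal{S}_n$, finite action set $\mathcal{A}_n$, transition kernel $p_n(s'|s,a)$ and reward $r_n(s,a)\in\mathbb{R}$, and a discount factor $\gamma\in[0,1)$. The joint state space is $\mathcal{S}^{(N)}=\prod_n\mathcal{S}_n$; the joint feasible action set is $\mathcal{A}^{(N)}=\{(a_1,\dots,a_N): a_n\in\mathcal{A}_n,\ \sum_{n=1}^N d_{k,n}(a_n)\le b_k\ \forall k\in[K]\}$ with $d_{k,n}\ge 0$, $b_k\ge0$, and an idle action consuming no resource. Joint transitions are $P^{(N)}(\mathbf{s}'|\mathbf{s},\mathbf{a})=\prod_{n}p_n(s'_n|s_n,a_n)$ and the vector reward is $\mathbf{r}(\mathbf{s},\mathbf{a})=(r_1(s_1,a_1),\dots,r_N(s_N,a_N))$. The initial joint state is drawn from a distribution $\boldsymbol{\mu}$ on $\mathcal{S}^{(N)}$. A stationary Markov policy $\pi$ gives probabilities $\pi(\mathbf{s},\mathbf{a})$ over $\mathbf{a}\in\mathcal{A}^{(N)}$ for each $\mathbf{s}$. The value vector is $\mathbf{V}_0^{\pi}=\mathbb{E}_{\pi}\big[\sum_{t\ge0}\gamma^t\mathbf{r}(\mathbf{s}_t,\mathbf{a}_t)\,\big|\,\mathbf{s}_0\sim\boldsymbol{\mu}\big]\in\mathbb{R}^N$,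 with components $V^{\pi}_{0,n}$. Permutations: for a permutation $\sigma$ of $[N]$, the permutation operator $Q$ acts on any $N$-tuple $\mathbf{v}$ by $(Q\mathbf{v})_n=v_{\sigma(n)}$; it acts in the same way on joint states and joint actions. $\mathcal{G}^N$ denotes the set of all $N!$ such operators. The WCMDP is symmetric if: (1) all sub-MDPs are identical ($\mathcal{S}_n=\mathcal{S}$, $\mathcal{A}_n=\mathcal{A}$, $p_n=p$, $r_n=r$ for all $n$); (2) resource consumption is symmetric ($d_{k,n}=d_k$ for all $n$); (3) $\boldsymbol{\mu}(\mathbf{s}_0)=\boldsymbol{\mu}(Q\mathbf{s}_0)$ for all $\mathbf{s}_0$ and all $Q\in\mathcal{G}^N$. A stationary Markov policy $\pi$ is permutation invariant if $\pi(\mathbf{s},\mathbf{a})=\pi(Q\mathbf{s},Q\mathbf{a})$ for all $Q\in\mathcal{G}^N$, $\mathbf{s}$, $\mathbf{a}$. *)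

From HB Require Import structures.
From mathcomp Require Import all_boot all_order all_algebra all_fingroup.
From mathcomp Require Import all_classical all_reals all_analysis.
Set Implicit Arguments. Unset Strict Implicit. Unset Printing Implicit Defensive.
Import Order.TTheory GRing.Theory Num.Theory numFieldNormedType.Exports.
Local Open Scope ring_scope.

(* A symmetric WCMDP with N identical sub-MDPs with state set S, action set A,
   kernel p (p s a s' = p(s'|s,a)), reward r, K resource constraints with
   per-arm consumption d k a and budgets b k. *)

Definition jstate (S : finType) (N : nat) := {ffun 'I_N -> S}.
Definition jaction (A : finType) (N : nat) := {ffun 'I_N -> A}.

Definition permQ (T : Type) (N : nat) (sigma : {perm 'I_N}) (v : {ffun 'I_N -> T})
  : {ffun 'I_N -> T} := [ffun n => v (sigma n)].

Definition feasible (R : realType) (A : finType) (N K : nat)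
  (d : 'I_K -> A -> R) (b : 'I_K -> R) (a : jaction A N) : bool :=
  [forall k, \sum_(n < N) d k (a n) <= b k].

Definition is_kernel (R : realType) (S A : finType) (p : S -> A -> S -> R) : Prop :=
  (forall s a s', 0 <= p s a s') /\ (forall s a, \sum_(s' : S) p s a s' = 1).

Definition is_distr (R : realType) (S : finType) (N : nat) (mu : jstate S N -> R) : Prop :=
  (forall s, 0 <= mu s) /\ \sum_(s : jstate S N) mu s = 1.

Definition is_policy (R : realType) (S A : finType) (N K : nat)
  (d : 'I_K -> A -> R) (b : 'I_K -> R) (pi : jstate S N -> jaction A N -> R) : Prop :=
  [/\ (forall s a, 0 <= pi s a),
      (forall s a, ~~ feasible d b a -> pi s a = 0)
    & (forall s, \sum_(a : jaction A N) pi s a = 1)].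

Definition perm_invariant (R : realType) (S A : finType) (N : nat)
  (pi : jstate S N -> jaction A N -> R) : Prop :=
  forall (sigma : {perm 'I_N}) s a, pi s a = pi (permQ sigma s) (permQ sigma a).

Definition jtrans (R : realType) (S A : finType) (N : nat) (p : S -> A -> S -> R)
  (s : jstate S N) (a : jaction A N) (s' : jstate S N) : R :=
  \prod_(n < N) p (s n) (a n) (s' n).

Fixpoint state_law (R : realType) (S A : finType) (N : nat) (p : S -> A -> S -> R)
  (mu : jstate S N -> R) (pi : jstate S N -> jaction A N -> R) (t : nat)
  : jstate S N -> R :=
  match t with
  | 0 => mu
  | t'.+1 => fun s' => \sum_(s : jstate S N) \sum_(a : jaction A N)
              state_law p mu pi t' s * pi s a * jtrans p s a s'
  end.

Definition exp_reward (R : realType) (S A : finType) (N : nat) (p : S -> A -> S -> R)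
  (r : S -> A -> R) (mu : jstate S N -> R) (pi : jstate S N -> jaction A N -> R)
  (t : nat) (n : 'I_N) : R :=
  \sum_(s : jstate S N) \sum_(a : jaction A N)
    state_law p mu pi t s * pi s a * r (s n) (a n).

(* V^pi_{0,n} = E_pi[ sum_t gamma^t r_n(s_t,a_t) ] = sum_t gamma^t E_pi[r_n(s_t,a_t)] *)
Definition value (R : realType) (S A : finType) (N : nat) (p : S -> A -> S -> R)
  (r : S -> A -> R) (gamma : R) (mu : jstate S N -> R)
  (pi : jstate S N -> jaction A N -> R) (n : 'I_N) : R :=
  limn (series (fun t : nat => gamma ^+ t * exp_reward p r mu pi t n)).

From HB Require Import structures.
From mathcomp Require Import all_boot all_order all_algebra all_fingroup.
From mathcomp Require Import all_classical all_reals all_analysis.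
From mathcomp Require Import ring.
Import Order.TTheory GRing.Theory Num.Theory numFieldNormedType.Exports.
Set Implicit Arguments. Unset Strict Implicit. Unset Printing Implicit Defensive.
Local Open Scope ring_scope.
Local Open Scope classical_set_scope.

(* The discounted occupation measure Y of a policy pi, the solution of
   Y = mu + gamma Y P_pi, determines all its values: V_n = sum_s Y(s) E_pi(s)[r_n].
   Averaging Y, and the state-action occupation Y(s) pi(s,a), over all relabellings
   of the arms and conditioning the second on the first gives a permutation
   invariant policy pibar. Since mu and the dynamics are symmetric, each relabelled
   measure again satisfies the occupation equation, so the average is the
   occupation measure of pibar; hence the value of pibar at arm n is the average
   over sigma of the value of pi at arm sigma n, i.e. the mean over all arms. *)

Section DiscountedMarkovChain.
Variables (R : realType) (X : finType) (M : X -> X -> R) (mu : X -> R) (gamma : R).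
Hypotheses (M_ge0 : forall x y, 0 <= M x y) (M_sum1 : forall x, \sum_y M x y = 1).
Hypotheses (gamma_ge0 : 0 <= gamma) (gamma_lt1 : gamma < 1).

Fixpoint chain_law t : X -> R :=
  if t is t'.+1 then fun y => \sum_x chain_law t' x * M x y else mu.

Definition kmul (h : X -> R) : X -> R := fun x => \sum_y M x y * h y.

Definition occupation_eq (Y : X -> R) : Prop :=
  forall y, Y y = mu y + gamma * \sum_x Y x * M x y.

Lemma chain_law_expectation t h :
  \sum_x chain_law t x * h x = \sum_x mu x * iter t kmul h x.
Proof.
elim: t h => [|t IH] h //=.
rewrite -iterS iterSr -IH.
under eq_bigr do rewrite big_distrl /=.
rewrite exchange_big /=; apply: eq_bigr => x _.
by rewrite /kmul big_distrr /=; apply: eq_bigr => y _; rewrite mulrA.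
Qed.

Lemma norm_iter_kmul_le t h B :
  (forall x, `|h x| <= B) -> forall x, `|iter t kmul h x| <= B.
Proof.
move=> hB; elim: t => [|t IH] x //=.
apply: le_trans (ler_norm_sum _ _ _) _.
apply: le_trans (_ : \sum_y M x y * B <= B); last by rewrite -big_distrl /= M_sum1 mul1r.
by apply: ler_sum => y _; rewrite normrM ger0_norm // ler_wpM2l.
Qed.

Section Occupation.
Variable Y : X -> R.
Hypothesis Y_occ : occupation_eq Y.

Lemma occupation_kmul h :
  \sum_x Y x * h x = \sum_x mu x * h x + gamma * \sum_x Y x * kmul h x.
Proof.
under eq_bigr do rewrite Y_occ mulrDl.
rewrite big_split /=; congr (_ + _).
transitivity (\sum_y \sum_x gamma * (Y x * (M x y * h y))).
  apply: eq_bigr => y _; rewrite big_distrr big_distrl /=.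
  by apply: eq_bigr => x _; rewrite !mulrA.
rewrite exchange_big [RHS]big_distrr /=; apply: eq_bigr => x _.
by rewrite /kmul 2!big_distrr.
Qed.

Lemma occupation_series_split f T :
  \sum_x Y x * f x = series (fun t => gamma ^+ t * \sum_x chain_law t x * f x) T
                     + gamma ^+ T * \sum_x Y x * iter T kmul f x.
Proof.
elim: T => [|T IH]; first by rewrite /series /= big_geq // expr0 mul1r add0r.
by rewrite seriesSr IH /= chain_law_expectation occupation_kmul exprSr; ring.
Qed.

Lemma discounted_series_occupation f :
  series (fun t => gamma ^+ t * \sum_x chain_law t x * f x) n @[n --> \oo]
    --> \sum_x Y x * f x.
Proof.
set B := \sum_x `|f x|.
have f_le x : `|f x| <= B by rewrite /B (bigD1 x) //= lerDl sumr_ge0.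
set C := \sum_x `|Y x| * B.
have rem_le T : `|\sum_x Y x * iter T kmul f x| <= C.
  apply: le_trans (ler_norm_sum _ _ _) _; apply: ler_sum => x _.
  by rewrite normrM ler_wpM2l // norm_iter_kmul_le.
have -> : series (fun t => gamma ^+ t * \sum_x chain_law t x * f x) =
    fun T => \sum_x Y x * f x - gamma ^+ T * \sum_x Y x * iter T kmul f x.
  by apply/funext => T; rewrite (occupation_series_split f T) addrK.
rewrite -[X in _ --> X]subr0; apply: cvgB; first exact: cvg_cst.
have gamma_pow_cvg : (gamma ^+ n) @[n --> \oo] --> 0.
  by apply: cvg_expr; rewrite ger0_norm.
apply: (@squeeze_cvgr _ _ _ _ (fun T => - (gamma ^+ T * C)) (fun T => gamma ^+ T * C)).
- apply: nearW => T; rewrite -ler_norml normrM ger0_norm ?exprn_ge0 //.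
  by rewrite ler_wpM2l ?exprn_ge0.
- by rewrite -oppr0 -(mul0r C); apply: cvgN; exact: cvgM gamma_pow_cvg (cvg_cst C).
- by rewrite -(mul0r C); exact: cvgM gamma_pow_cvg (cvg_cst C).
Qed.

End Occupation.

Definition partial_occupation x := series (fun t => gamma ^+ t * chain_law t x).

Lemma partial_occupationS x T :
  partial_occupation x T.+1 = mu x + gamma * \sum_y partial_occupation y T * M y x.
Proof.
elim: T x => [|T IH] x.
  rewrite /partial_occupation seriesSr /series /= !big_geq // expr0 mul1r add0r.
  by rewrite big1 ?mulr0 ?addr0 // => y _; rewrite big_geq // mul0r.
rewrite /partial_occupation seriesSr -/(partial_occupation x T.+1) IH -addrA.
congr (_ + _); rewrite exprS -mulrA -mulrDr big_distrr -big_split /=; congr (_ * _).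
by apply: eq_bigr => y _; rewrite /partial_occupation seriesSr mulrDl mulrA.
Qed.

Hypotheses (mu_ge0 : forall x, 0 <= mu x) (mu_sum1 : \sum_x mu x = 1).

Lemma chain_law_ge0 t x : 0 <= chain_law t x.
Proof. by elim: t x => [|t IH] x //=; apply: sumr_ge0 => y _; rewrite mulr_ge0. Qed.

Lemma chain_law_sum1 t : \sum_x chain_law t x = 1.
Proof.
elim: t => [|t IH] //=; rewrite exchange_big /= -[RHS]IH.
by apply: eq_bigr => x _; rewrite -big_distrr /= M_sum1 mulr1.
Qed.

Lemma chain_law_le1 t x : chain_law t x <= 1.
Proof.
rewrite -(chain_law_sum1 t) (bigD1 x) //= lerDl.
by apply: sumr_ge0 => y _; exact: chain_law_ge0.
Qed.

Lemma cvgn_partial_occupation x : cvgn (partial_occupation x).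
Proof.
apply: (@series_le_cvg _ _ (geometric 1 gamma)) => [t|t|t|].
- by rewrite mulr_ge0 ?exprn_ge0 ?chain_law_ge0.
- by rewrite /= mul1r exprn_ge0.
- by rewrite /= mul1r ler_piMr ?exprn_ge0 ?chain_law_le1.
- by apply: is_cvg_geometric_series; rewrite ger0_norm.
Qed.

Lemma occupation_exists : exists2 Y : X -> R, (forall x, 0 <= Y x) & occupation_eq Y.
Proof.
exists (fun x => limn (partial_occupation x)) => [x|y].
  apply: limr_ge; first exact: cvgn_partial_occupation.
  by apply: nearW => T; apply: sumr_ge0 => t _; rewrite mulr_ge0 ?exprn_ge0 ?chain_law_ge0.
have shifted_cvg : partial_occupation y T.+1 @[T --> \oo] --> limn (partial_occupation y).
  by rewrite (cvg_shiftS (partial_occupation y)); exact: cvgn_partial_occupation.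
rewrite -(norm_cvg_lim shifted_cvg); apply: norm_cvg_lim.
under eq_cvg do rewrite partial_occupationS.
apply: cvgD; first exact: cvg_cst.
apply: cvgM; first exact: cvg_cst.
apply: cvg_big => [|x _]; first exact: add_continuous.
by apply: cvgM; [exact: cvgn_partial_occupation | exact: cvg_cst].
Qed.

End DiscountedMarkovChain.

Lemma avg_perm_apply (R : numFieldType) (T : finType) (F : T -> R) (x : T) :
  #|{perm T}|%:R^-1 * \sum_(s : {perm T}) F (s x) = #|T|%:R^-1 * \sum_y F y.
Proof.
have sum_perm_apply y : \sum_(s : {perm T}) F (s y) = \sum_(s : {perm T}) F (s x).
  rewrite [LHS](reindex_inj (mulgI (tperm x y))); apply: eq_bigr => s _.
  by rewrite permM tpermR.
have card_mul_sum : #|T|%:R * \sum_(s : {perm T}) F (s x) = #|{perm T}|%:R * \sum_y F y.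
  rewrite mulr_natl -sumr_const -(eq_bigr _ (fun y _ => sum_perm_apply y)).
  rewrite exchange_big /= mulr_natl -sumr_const.
  apply: eq_big => // s _; rewrite [RHS](reindex_inj (@perm_inj _ s)) /=.
  by apply: eq_bigl.
have cardT_neq0 : #|T|%:R != 0 :> R by rewrite pnatr_eq0 -lt0n; apply/card_gt0P; exists x.
have cardP_neq0 : #|{perm T}|%:R != 0 :> R.
  by rewrite pnatr_eq0 -lt0n; apply/card_gt0P; exists 1%g.
by apply: (mulfI cardT_neq0); rewrite mulrCA card_mul_sum mulKf // mulVKf.
Qed.

Lemma permQK (T : Type) (N : nat) (sigma : {perm 'I_N}) (v : {ffun 'I_N -> T}) :
  permQ sigma^-1 (permQ sigma v) = v.
Proof. by apply/ffunP => n; rewrite !ffunE permKV. Qed.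

Lemma permQ_inj (T : Type) (N : nat) (sigma : {perm 'I_N}) : injective (@permQ T N sigma).
Proof. exact: can_inj (permQK sigma). Qed.

Lemma permQM (T : Type) (N : nat) (s t : {perm 'I_N}) (v : {ffun 'I_N -> T}) :
  permQ s (permQ t v) = permQ (s * t)%g v.
Proof. by apply/ffunP => n; rewrite !ffunE permM. Qed.

Lemma sum_permQ (R : nmodType) (T : finType) (N : nat) (sigma : {perm 'I_N})
    (F : {ffun 'I_N -> T} -> R) :
  \sum_v F (permQ sigma v) = \sum_v F v.
Proof. by rewrite [RHS](reindex_inj (@permQ_inj T N sigma)). Qed.

Lemma sum_permQ2 (R : nmodType) (S A : finType) (N : nat) (sigma : {perm 'I_N})
    (G : {ffun 'I_N -> S} -> {ffun 'I_N -> A} -> R) :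
  \sum_s \sum_a G (permQ sigma s) (permQ sigma a) = \sum_s \sum_a G s a.
Proof.
rewrite -[RHS](sum_permQ sigma); apply: eq_bigr => s _.
exact: (sum_permQ sigma (G (permQ sigma s))).
Qed.

Section SymmetricWCMDP.
Variables (R : realType) (S A : finType) (N K : nat)
  (p : S -> A -> S -> R) (r : S -> A -> R) (d : 'I_K -> A -> R) (b : 'I_K -> R)
  (gamma : R) (mu : jstate S N -> R).

Definition policy_kernel (pi : jstate S N -> jaction A N -> R) (s s' : jstate S N) : R :=
  \sum_a pi s a * jtrans p s a s'.

Definition policy_reward (pi : jstate S N -> jaction A N -> R) (n : 'I_N)
  (s : jstate S N) : R :=
  \sum_a pi s a * r (s n) (a n).

Lemma jtrans_permQ sigma (s : jstate S N) (a : jaction A N) (s' : jstate S N) :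
  jtrans p (permQ sigma s) (permQ sigma a) (permQ sigma s') = jtrans p s a s'.
Proof.
rewrite /jtrans; under eq_bigr do rewrite !ffunE.
by rewrite [RHS](reindex_inj (@perm_inj _ sigma)).
Qed.

Lemma feasible_permQ sigma (a : jaction A N) :
  feasible d b (permQ sigma a) = feasible d b a.
Proof.
apply: eq_forallb => k /=; under eq_bigr do rewrite ffunE.
by rewrite [X in _ = (X <= _)](reindex_inj (@perm_inj _ sigma)).
Qed.

Hypothesis p_kernel : is_kernel p.
Hypotheses (gamma_ge0 : 0 <= gamma) (gamma_lt1 : gamma < 1).

Lemma jtrans_ge0 (s : jstate S N) (a : jaction A N) (s' : jstate S N) :
  0 <= jtrans p s a s'.
Proof. by apply: prodr_ge0 => n _; case: p_kernel. Qed.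

Lemma jtrans_sum1 (s : jstate S N) (a : jaction A N) :
  \sum_(s' : jstate S N) jtrans p s a s' = 1.
Proof.
transitivity (\prod_(n < N) \sum_(x : S) p (s n) (a n) x).
  by rewrite bigA_distr_bigA.
by rewrite big1 // => n _; case: p_kernel => _ ->.
Qed.

Section Policy.
Variable pi : jstate S N -> jaction A N -> R.
Hypothesis pi_policy : is_policy d b pi.

Lemma policy_kernel_ge0 s s' : 0 <= policy_kernel pi s s'.
Proof.
case: pi_policy => pi_ge0 _ _.
by apply: sumr_ge0 => a _; rewrite mulr_ge0 ?jtrans_ge0.
Qed.

Lemma policy_kernel_sum1 s : \sum_s' policy_kernel pi s s' = 1.
Proof.
case: pi_policy => _ _ pi_sum1; rewrite exchange_big /= -[RHS](pi_sum1 s).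
by apply: eq_bigr => a _; rewrite -big_distrr /= jtrans_sum1 mulr1.
Qed.

Lemma state_law_chain t : state_law p mu pi t = chain_law (policy_kernel pi) mu t.
Proof.
apply/funext; elim: t => [|t IH] s //=; apply: eq_bigr => s0 _.
by rewrite IH big_distrr /=; apply: eq_bigr => a _; rewrite /= mulrA.
Qed.

Lemma value_occupation Y n : occupation_eq (policy_kernel pi) mu gamma Y ->
  value p r gamma mu pi n = \sum_s Y s * policy_reward pi n s.
Proof.
move=> Y_occ; rewrite /value (_ : (fun t => _) = fun t => gamma ^+ t *
    \sum_s chain_law (policy_kernel pi) mu t s * policy_reward pi n s).
  apply/norm_cvg_lim/discounted_series_occupation => //.
  - exact: policy_kernel_ge0.
  - exact: policy_kernel_sum1.
apply/funext => t; rewrite /exp_reward state_law_chain; congr (_ * _).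
by apply: eq_bigr => s _; rewrite big_distrr; apply: eq_bigr => a _; rewrite /= mulrA.
Qed.

End Policy.

Section Symmetrization.
Variables (pi : jstate S N -> jaction A N -> R) (Y : jstate S N -> R) (idle : A).
Hypothesis pi_policy : is_policy d b pi.
Hypothesis Y_ge0 : forall s, 0 <= Y s.
Hypothesis Y_occ : occupation_eq (policy_kernel pi) mu gamma Y.

Definition sym_occupation (s : jstate S N) : R :=
  \sum_(sigma : {perm 'I_N}) Y (permQ sigma s).

Definition sym_pair_occupation (s : jstate S N) (a : jaction A N) : R :=
  \sum_(sigma : {perm 'I_N}) Y (permQ sigma s) * pi (permQ sigma s) (permQ sigma a).

Definition idle_action : jaction A N := [ffun=> idle].

(* Off the support of the occupation measure any feasible choice will do;
   all arms idle is feasible. *)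
Definition sym_policy (s : jstate S N) (a : jaction A N) : R :=
  if sym_occupation s == 0 then (a == idle_action)%:R
  else sym_pair_occupation s a / sym_occupation s.

Lemma sym_occupation_ge0 s : 0 <= sym_occupation s.
Proof. exact: sumr_ge0. Qed.

Lemma sym_occupation_permQ t s : sym_occupation (permQ t s) = sym_occupation s.
Proof.
rewrite /sym_occupation [RHS](reindex_inj (mulIg t)).
by apply: eq_bigr => sigma _; rewrite permQM.
Qed.

Lemma sym_pair_occupation_permQ t s a :
  sym_pair_occupation (permQ t s) (permQ t a) = sym_pair_occupation s a.
Proof.
rewrite /sym_pair_occupation [RHS](reindex_inj (mulIg t)).
by apply: eq_bigr => sigma _; rewrite !permQM.
Qed.

Lemma sum_sym_pair_occupation s : \sum_a sym_pair_occupation s a = sym_occupation s.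
Proof.
case: pi_policy => _ _ pi_sum1.
rewrite exchange_big /=; apply: eq_bigr => sigma _.
by rewrite -big_distrr /= (sum_permQ sigma (pi (permQ sigma s))) pi_sum1 mulr1.
Qed.

Lemma mul_sym_occupation_policy s a :
  sym_occupation s * sym_policy s a = sym_pair_occupation s a.
Proof.
rewrite /sym_policy; case: eqP => [Ybar0|/eqP Ybar_neq0]; last by rewrite mulrC divfK.
have Y0 sigma : Y (permQ sigma s) = 0.
  exact: (psumr_eq0P (fun sigma _ => Y_ge0 (permQ sigma s)) Ybar0).
by rewrite Ybar0 mul0r /sym_pair_occupation big1 // => sigma _; rewrite Y0 mul0r.
Qed.

Hypotheses (b_ge0 : forall k, 0 <= b k) (d_idle : forall k, d k idle = 0).

Lemma sym_policy_is_policy : is_policy d b sym_policy.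
Proof.
case: pi_policy => pi_ge0 pi_infeasible _.
have idle_feasible : feasible d b idle_action.
  by rewrite /feasible; apply/forallP => k; rewrite big1 // => n _; rewrite ffunE d_idle.
split=> [s a|s a a_infeasible|s]; rewrite /sym_policy; case: eqP => // occ_s.
- by rewrite divr_ge0 ?sym_occupation_ge0 // sumr_ge0 // => sigma _; rewrite mulr_ge0.
- by case: eqP a_infeasible => // ->; rewrite idle_feasible.
- rewrite /sym_pair_occupation big1 ?mul0r // => sigma _.
  by rewrite pi_infeasible ?mulr0 // feasible_permQ.
- by rewrite (bigD1 idle_action) //= eqxx big1 ?addr0 // => a /negbTE ->.
- by rewrite -big_distrl /= sum_sym_pair_occupation mulfV //; apply/eqP.
Qed.

Lemma sym_policy_perm_invariant : perm_invariant sym_policy.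
Proof.
move=> t s a; rewrite /sym_policy sym_occupation_permQ sym_pair_occupation_permQ.
suff -> : (permQ t a == idle_action) = (a == idle_action) by [].
rewrite -[in LHS](_ : permQ t idle_action = idle_action).
  exact: (inj_eq (@permQ_inj A N t)).
by apply/ffunP => n; rewrite !ffunE.
Qed.

Hypothesis mu_sym : forall (sigma : {perm 'I_N}) s, mu s = mu (permQ sigma s).

Lemma sum_sym_occupation_policy (g : jstate S N -> jaction A N -> R) :
  \sum_s sym_occupation s * \sum_a sym_policy s a * g s a =
  \sum_(sigma : {perm 'I_N}) \sum_s \sum_a
    Y (permQ sigma s) * pi (permQ sigma s) (permQ sigma a) * g s a.
Proof.
rewrite [RHS]exchange_big; apply: eq_bigr => s _ /=.
rewrite [RHS]exchange_big big_distrr; apply: eq_bigr => a _ /=.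
by rewrite mulrA mul_sym_occupation_policy big_distrl.
Qed.

Lemma occupation_sym_policy : occupation_eq (policy_kernel sym_policy) mu gamma
  (fun s => sym_occupation s / #|{perm 'I_N}|%:R).
Proof.
move=> s'; set c : R := #|{perm 'I_N}|%:R.
have c_neq0 : c != 0 by rewrite pnatr_eq0 -lt0n; apply/card_gt0P; exists 1%g.
(* Relabelling the arms by [sigma] turns the occupation equation of [Y] at
   [permQ sigma s'] into one term of the symmetrized equation at [s']. *)
have relabelled_occ sigma : gamma * \sum_s \sum_a
    Y (permQ sigma s) * pi (permQ sigma s) (permQ sigma a) * jtrans p s a s' =
    Y (permQ sigma s') - mu s'.
  under eq_bigr do under eq_bigr do rewrite -(jtrans_permQ sigma).
  rewrite (sum_permQ2 sigma (fun u v => Y u * pi u v * jtrans p u v (permQ sigma s'))).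
  rewrite (mu_sym sigma s') [in RHS]Y_occ addrC addKr; congr (_ * _).
  apply: eq_bigr => s _; rewrite big_distrr; apply: eq_bigr => a _.
  by rewrite /= mulrA.
have -> : \sum_s sym_occupation s / c * policy_kernel sym_policy s s' =
    c^-1 * \sum_s sym_occupation s * policy_kernel sym_policy s s'.
  by rewrite big_distrr; apply: eq_bigr => s _; rewrite /= mulrAC mulrC.
rewrite sum_sym_occupation_policy mulrCA big_distrr /=.
under eq_bigr do rewrite relabelled_occ.
rewrite sumrB sumr_const -mulr_natr (_ : #|xpredT|%:R = c) //.
by rewrite /sym_occupation; field.
Qed.

Lemma value_sym_policy n : value p r gamma mu sym_policy n =
  #|{perm 'I_N}|%:R^-1 * \sum_(sigma : {perm 'I_N}) value p r gamma mu pi (sigma n).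
Proof.
rewrite (value_occupation sym_policy_is_policy n occupation_sym_policy).
under eq_bigr do rewrite mulrAC mulrC.
rewrite -big_distrr /= (sum_sym_occupation_policy (fun s a => r (s n) (a n))).
congr (_ * _).
rewrite [RHS](reindex_inj invg_inj); apply: eq_bigr => sigma _.
transitivity (\sum_s \sum_a
    Y s * pi s a * r (s ((sigma^-1)%g n)) (a ((sigma^-1)%g n))).
  rewrite -(sum_permQ2 sigma
    (fun u v => Y u * pi u v * r (u ((sigma^-1)%g n)) (v ((sigma^-1)%g n)))).
  by apply: eq_bigr => s _; apply: eq_bigr => a _; rewrite !ffunE !permKV.
rewrite (value_occupation pi_policy _ Y_occ); apply: eq_bigr => s _.
by rewrite big_distrr; apply: eq_bigr => a _; rewrite /= mulrA.
Qed.

End Symmetrization.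
End SymmetricWCMDP.

Theorem lemma3p1 (R : realType) (S A : finType) (N K : nat)
  (p : S -> A -> S -> R) (r : S -> A -> R)
  (d : 'I_K -> A -> R) (b : 'I_K -> R) (idle : A) (gamma : R)
  (mu : jstate S N -> R) :
  is_kernel p ->
  (forall k a, 0 <= d k a) ->
  (forall k, 0 <= b k) ->
  (forall k, d k idle = 0) ->
  0 <= gamma -> gamma < 1 ->
  is_distr mu ->
  (forall (sigma : {perm 'I_N}) s0, mu s0 = mu (permQ sigma s0)) ->
  forall pi : jstate S N -> jaction A N -> R,
  is_policy d b pi ->
  exists pibar : jstate S N -> jaction A N -> R,
    [/\ is_policy d b pibar,
        perm_invariant pibar
      & forall n : 'I_N,
          value p r gamma mu pibar n
          = N%:R^-1 * \sum_(m < N) value p r gamma mu pi m].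
Proof.
move=> p_kernel _ b_ge0 d_idle gamma_ge0 gamma_lt1 [mu_ge0 mu_sum1] mu_sym pi pi_policy.
have [Y Y_ge0 Y_occ] := occupation_exists (policy_kernel_ge0 p_kernel pi_policy)
  (policy_kernel_sum1 p_kernel pi_policy) gamma_ge0 gamma_lt1 mu_ge0 mu_sum1.
exists (sym_policy pi Y idle); split.
- exact: sym_policy_is_policy.
- exact: sym_policy_perm_invariant.
- move=> n; rewrite (value_sym_policy r p_kernel gamma_ge0 gamma_lt1 pi_policy) //.
  by rewrite avg_perm_apply card_ord.
Qed.
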